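(* Let $p$ be a prime and $3\le k\le p$. Then for every $n$ and every subset $S\subseteq\mathbb{F}_p^n$ with $|S|\ge p^{1+(1-\frac1k)n}$, the set $(S-S)\setminus\{0\}$ contains a non-trivial $k$-term arithmetic progression, i.e. elements $y,y+d,\dots,y+(k-1)d$ with $d\ne0$.
   Context: $S-S=\{x-y:x,y\in S\}$. *)

From Stdlib Require Import Reals.
From HB Require Import structures.
From mathcomp Require Import all_boot all_order all_algebra.
Set Implicit Arguments. Unset Strict Implicit. Unset Printing Implicit Defensive.
Import GRing.Theory.
Local Open Scope ring_scope.

Definition diffset (V : finZmodType) (S : {set V}) : {set V} :=
  [set x - y | x in S, y in S].

Definition has_nontriv_AP (V : finZmodType) (k : nat) (A : {set V}) : Prop :=
  exists (y d : V), d != 0 /\ forall i : nat, (i < k)%nat -> y + d *+ i \in A.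

From Stdlib Require Import Reals Lra.
From mathcomp Require Import all_boot all_order all_algebra zify.
Import GRing.Theory.

(* Count k-tuples of elements of S by their vector of second differences
   f(i+2) - 2 f(i+1) + f(i), which takes at most |V|^(k-2) values.  If
   |S|^k > (k+1) |V|^(k-1), some fibre has more than (k+1) |V| tuples.  Two
   tuples s, t of one fibre differ by z = s - t with vanishing second
   differences, i.e. z is an arithmetic progression y + d i whose terms
   z i = s i - t i lie in S - S.  Fixing s, the tuples t for which z is
   degenerate (d = 0, or some z i = 0) are of the form s - g for at most
   (k+1) |V| tuples g, so some t of the fibre gives a non-trivial progression
   avoiding 0.  For S in F_p^n the density hypothesis gives
   |S|^k >= p^k |V|^(k-1) with p^k > k+1. *)

Lemma INR_expn (p e : nat) : INR (p ^ e) = pow (INR p) e.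
Proof. by elim: e => [|e IH] //=; rewrite expnS mult_INR IH. Qed.

Lemma Rpower_le_INR_expn {p k n s : nat} : (0 < p)%N -> (0 < k)%N ->
  Rle (Rpower (INR p) (Rplus (IZR 1) (Rmult (Rminus (IZR 1) (Rinv (INR k))) (INR n))))
      (INR s) ->
  (p ^ (k + (k - 1) * n) <= s ^ k)%N.
Proof.
move=> p_gt0 k_gt0; set a := Rplus _ _ => le_pa_s.
have p_pos : Rlt 0 (INR p) by apply: lt_0_INR; apply/ltP.
have k_neq0 : INR k <> IZR 0 by apply: not_0_INR => k0; rewrite k0 in k_gt0.
have pa_pos : Rlt 0 (Rpower (INR p) a) by apply: exp_pos.
have ak : Rmult a (INR k) = INR (k + (k - 1) * n).
  rewrite plus_INR mult_INR minus_INR; last by apply/leP.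
  by rewrite /a /=; field.
have pa_k : pow (Rpower (INR p) a) k = INR (p ^ (k + (k - 1) * n)).
  by rewrite -Rpower_pow // Rpower_mult ak Rpower_pow // INR_expn.
apply/leP; apply: INR_le; rewrite -pa_k INR_expn.
by apply: pow_incr; split => //; lra.
Qed.

Lemma succ_ltn_expn {p k : nat} : (1 < p)%N -> (1 < k)%N -> (k.+1 < p ^ k)%N.
Proof.
move=> p_gt1 k_gt1; have := ltn_expl k.-1 p_gt1.
case: k k_gt1 => // k k_gt0 /= lt_k_pk; rewrite expnS.
by move: lt_k_pk; set q := p ^ k; nia.
Qed.

Lemma exists_large_fiber (A B : finType) (f : A -> B) (T : {set A}) (M : nat) :
  (#|B| * M < #|T|)%N -> exists b, (M < #|[set a in T | f a == b]|)%N.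
Proof.
move=> lt_BM_T; apply/existsP; apply: contraLR lt_BM_T.
rewrite negb_exists -leqNgt => /forallP small_fibers.
have -> : #|T| = (\sum_b #|[set a in T | f a == b]|)%N.
  rewrite -sum1_card (partition_big f xpredT) //=.
  by apply: eq_bigr => b _; rewrite -sum1_card; apply: eq_bigl => a; rewrite inE.
rewrite -sum_nat_const.
by apply: leq_sum => b _; rewrite leqNgt small_fibers.
Qed.

Local Open Scope ring_scope.

Section DifferenceSetProgressions.
Set Implicit Arguments.

Variables (V : finZmodType) (m : nat).
Local Notation k := m.+2.
Local Notation tuple := {ffun 'I_k -> V}.

Definition second_diff (f : tuple) : {ffun 'I_m -> V} :=
  [ffun i : 'I_m => f (inord i.+2) - f (inord i.+1) *+ 2 + f (inord i)].

Lemma second_diffB (s t : tuple) :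
  second_diff (s - t) = second_diff s - second_diff t.
Proof.
have second_diff_termB (a a' b b' c c' : V) :
    a - a' - (b - b') *+ 2 + (c - c') = a - b *+ 2 + c - (a' - b' *+ 2 + c').
  rewrite mulrnBl opprB [b' *+ 2 - _]addrC [a - a' + _]addrACA.
  by rewrite [_ + (c - c')]addrACA; congr (_ + _); rewrite !opprD opprK.
by apply/ffunP => i; rewrite !ffunE second_diff_termB.
Qed.

Lemma second_diff_eq0_AP (z : tuple) : second_diff z = 0 ->
  forall i : 'I_k, z i = z ord0 + (z (inord 1) - z ord0) *+ i.
Proof.
move=> z_lin; set y := z ord0; set d := _ - y.
pose w j := z (inord j).
have w0 : w 0%N = y by rewrite /w; congr (z _); apply: val_inj; rewrite /= inordK.
have w_rec j : (j < m)%N -> w j.+2 = w j.+1 *+ 2 - w j.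
  move=> lt_jm; have := congr1 (fun f : {ffun 'I_m -> V} => f (Ordinal lt_jm)) z_lin.
  by rewrite !ffunE /= => /eqP; rewrite addr_eq0 subr_eq /w => /eqP ->; rewrite addrC.
have w_AP j : (j <= m)%N -> w j = y + d *+ j /\ w j.+1 = y + d *+ j.+1.
  elim: j => [|j IH] le_jm; first by rewrite w0 mulr0n addr0 mulr1n /d addrC subrK.
  have [wj wj1] := IH (ltnW le_jm); split=> //.
  have wj1B : w j.+1 - w j = d by rewrite wj wj1 opprD addrACA subrr add0r mulrS addrK.
  by rewrite w_rec // mulr2n -addrA wj1B wj1 -addrA -mulrSr.
move=> i; have -> : z i = w i by rewrite /w inord_val.
case: i => [[|j] lt_ik] /=; first by have [] := w_AP 0%N isT.
by have [] := w_AP j lt_ik.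
Qed.

(* [(d, None)] is the constant tuple [d]; [(d, Some j)] is the progression of
   difference [d] vanishing at [j]. *)
Definition degenerate_AP (x : V * option 'I_k) : tuple :=
  [ffun i : 'I_k => if x.2 is Some j then x.1 *+ i - x.1 *+ j else x.1].

Definition degenerate_APs : {set tuple} := [set degenerate_AP x | x in setT].

Lemma card_degenerate_APs : (#|degenerate_APs| <= k.+1 * #|V|)%N.
Proof.
apply: leq_trans (leq_imset_card _ _) _.
by rewrite cardsT card_prod card_option card_ord mulnC.
Qed.

Lemma nondegenerate_AP (z : tuple) : second_diff z = 0 -> z \notin degenerate_APs ->
  exists y d, d != 0 /\ forall i : 'I_k, z i = y + d *+ i /\ z i != 0.
Proof.
move=> z_lin z_nondeg; have z_AP := second_diff_eq0_AP z_lin.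
set y := z ord0 in z_AP; set d := _ - y in z_AP.
exists y, d; split=> [|i]; last split=> //.
  apply: contra z_nondeg => /eqP d0; apply/imsetP; exists (y, None) => //.
  by apply/ffunP => i; rewrite ffunE z_AP d0 mul0rn addr0.
apply: contra z_nondeg => /eqP zi0; apply/imsetP; exists (d, Some i) => //.
have y_eq : y = - (d *+ i) by apply/eqP; rewrite -addr_eq0 -z_AP zi0.
by apply/ffunP => j; rewrite ffunE z_AP y_eq addrC.
Qed.

Theorem diffset_has_nontriv_AP (S : {set V}) :
  (k.+1 * #|V| ^ k.-1 < #|S| ^ k)%N -> has_nontriv_AP k (diffset S :\ 0).
Proof.
move=> large_S; pose T := [set f : tuple | f \in ffun_on S].
have card_T : #|T| = (#|S| ^ k)%N by rewrite cardsE card_ffun_on card_ord.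
have [v large_F] : exists v, (k.+1 * #|V| < #|[set f in T | second_diff f == v]|)%N.
  by apply: exists_large_fiber; rewrite card_T card_ffun card_ord mulnCA -expnSr.
set F := [set f in T | _] in large_F.
have [s sF] : exists s, s \in F.
  by apply/set0Pn; rewrite -card_gt0; apply: leq_ltn_trans large_F.
have [t tF t_good] : exists2 t, t \in F & t \notin [set s - g | g : tuple in degenerate_APs].
  apply/subsetPn; apply: contraL large_F => /subset_leq_card le_F.
  by rewrite -leqNgt (leq_trans le_F) // (leq_trans (leq_imset_card _ _)) ?card_degenerate_APs.
move: sF tF; rewrite !inE => /andP[/ffun_onP sS /eqP s_v] /andP[/ffun_onP tS /eqP t_v].
have z_lin : second_diff (s - t) = 0 by rewrite second_diffB s_v t_v subrr.
have z_nondeg : s - t \notin degenerate_APs.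
  by apply: contra t_good => z_deg; apply/imsetP; exists (s - t) => //; rewrite opprB addrC subrK.
have [y [d [d_neq0 z_AP]]] := nondegenerate_AP z_lin z_nondeg.
exists y, d; split=> // i lt_ik; have [zi zi_neq0] := z_AP (Ordinal lt_ik).
rewrite -[i]/(nat_of_ord (Ordinal lt_ik)) -zi !inE zi_neq0 !ffunE /=.
by apply/imset2P; exists (s (Ordinal lt_ik)) (t (Ordinal lt_ik)); rewrite ?sS ?tS.
Qed.

End DifferenceSetProgressions.

Theorem corollaryE (p k : nat) (hp : prime p) (hk3 : (3 <= k)%N) (hkp : (k <= p)%N)
  (n : nat) (S : {set 'rV['F_p]_n}) :
  Rle (Rpower (INR p) (Rplus (IZR 1) (Rmult (Rminus (IZR 1) (Rinv (INR k))) (INR n)))) (INR #|S|) ->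
  has_nontriv_AP k (diffset S :\ 0).
Proof.
move=> dense_S; have p_gt1 := prime_gt1 hp; have p_gt0 := ltnW p_gt1.
have le_pk_Sk := Rpower_le_INR_expn p_gt0 (ltnW (ltnW hk3)) dense_S.
case: k hk3 hkp dense_S le_pk_Sk => [|[|m]] // _ _ _ le_pk_Sk.
apply: diffset_has_nontriv_AP.
rewrite card_mx card_Fp // mul1n -expnM (mulnC n).
apply: leq_trans le_pk_Sk; rewrite subn1 expnD ltn_pmul2r ?expn_gt0 ?p_gt0 //.
exact: succ_ltn_expn p_gt1 (isT : (1 < m.+2)%N).
Qed.
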